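(* Let $\Theta$ be a parameter space, $p(\theta)$ a prior on $\Theta$, $D=\{(y_i,x_i)\}_{i=1}^n$ a fixed dataset with likelihood $p(D\mid\theta)=\prod_{i=1}^n p(y_i\mid x_i,\theta)$, and $\nu$ the data-generating distribution on $\mathcal Y\times\mathcal X$. For $\lambda>0$ let $p_\lambda(\theta\mid D)\propto p(D\mid\theta)^\lambda p(\theta)$ be the tempered posterior, let $B(\rho)=\mathbb{E}_{(y,x)\sim\nu}\big[-\ln \mathbb{E}_{\theta\sim\rho}[p(y\mid x,\theta)]\big]$ be the Bayes loss and $\hat G(\rho,D)=\mathbb{E}_{\theta\sim\rho}[-\ln p(D\mid\theta)]$ the empirical Gibbs loss of a distribution $\rho$ on $\Theta$. If $\frac{d}{d\lambda}B(p_\lambda)\big|_{\lambda=1}<0$ (the cold posterior effect), then \[ \hat G(p_{1},D) > \min_{\theta} -\ln p(D\mid\theta). \]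
   Context: The tempered posterior is assumed to be a proper distribution. $p_1$ denotes $p_\lambda$ at $\lambda=1$, i.e. the standard Bayesian posterior. *)

From HB Require Import structures.
From mathcomp Require Import all_boot all_order all_algebra.
From mathcomp Require Import all_classical all_reals all_analysis measurable_realfun.
Set Implicit Arguments. Unset Strict Implicit. Unset Printing Implicit Defensive.
Import Order.TTheory GRing.Theory Num.Theory.
Local Open Scope classical_set_scope.
Local Open Scope ring_scope.

(* The measure with density g with respect to mu:  U |-> \int[mu]_(x in U) g x.
   (Degenerates to the zero measure if g is not measurable and nonnegative.) *)
Section density_measure.
Local Open Scope ereal_scope.
Context d (T : measurableType d) (R : realType).
Variables (mu : {measure set T -> \bar R}) (g : T -> R).

Definition density_measure (U : set T) : \bar R :=
  if `[< measurable_fun setT g /\ forall x, (0 <= g x)%R >]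
  then \int[mu]_(x in U) (g x)%:E else 0.

Let dm0 : density_measure set0 = 0.
Proof. by rewrite /density_measure; case: ifPn => // _; rewrite integral_set0. Qed.

Let dm_ge0 U : 0 <= density_measure U.
Proof.
rewrite /density_measure; case: ifPn => // /asboolP[_ g0].
by apply: integral_ge0 => x _; rewrite lee_fin.
Qed.

Let dm_sigma : semi_sigma_additive density_measure.
Proof.
move=> F mF tF mUF; rewrite /density_measure; case: ifPn => [/asboolP[mg g0]|_].
  rewrite ge0_integral_bigcup//; last first.
    - by move=> x _; rewrite lee_fin.
    - by apply/measurable_EFinP; exact: measurable_funS mg.
  apply: is_cvg_nneseries => n _ _; apply: integral_ge0 => x _.
  by rewrite lee_fin.
rewrite (_ : (fun n => _) = cst 0); first exact: cvg_cst.
by apply/funext => n /=; rewrite big1.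
Qed.

HB.instance Definition _ := isMeasure.Build _ _ _ density_measure
  dm0 dm_ge0 dm_sigma.

End density_measure.

Section tempered.
Local Open Scope ereal_scope.
Context dT dY dX (Theta : measurableType dT) (Y : measurableType dY)
  (X : measurableType dX) (R : realType).

Definition likelihood (f : Y -> X -> Theta -> R) (n : nat) (D : 'I_n -> (Y * X)%type)
  (theta : Theta) : R :=
  (\prod_(i < n) f (D i).1 (D i).2 theta)%R.

Definition evidence (prior : probability Theta R) (f : Y -> X -> Theta -> R)
  (n : nat) (D : 'I_n -> (Y * X)%type) (lambda : R) : \bar R :=
  \int[prior]_theta ((likelihood f D theta) `^ lambda)%R%:E.

(* tempered posterior p_lambda(theta | D) \propto p(D|theta)^lambda p(theta),
   i.e. the normalisation of the measure with density p(D|.)^lambda w.r.t. the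
   prior (mnormalize falls back to the prior when the posterior is improper,
   which is excluded by hypothesis in the theorem). *)
Definition tempered_posterior (prior : probability Theta R)
  (f : Y -> X -> Theta -> R) (n : nat) (D : 'I_n -> (Y * X)%type) (lambda : R) :=
  mnormalize (density_measure prior (fun theta => ((likelihood f D theta) `^ lambda)%R))
    prior.

Definition bayes_loss (nu : probability (Y * X)%type R) (f : Y -> X -> Theta -> R)
  (rho : {measure set Theta -> \bar R}) : \bar R :=
  \int[nu]_z (- lne (\int[rho]_theta (f z.1 z.2 theta)%:E)).

Definition gibbs_loss (f : Y -> X -> Theta -> R) (n : nat) (D : 'I_n -> (Y * X)%type)
  (rho : {measure set Theta -> \bar R}) : \bar R :=
  \int[rho]_theta (- lne (likelihood f D theta)%:E).

End tempered.

(* If the Gibbs loss of p_1 were not above the minimum -ln L* of -ln p(D|.),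
   then -ln p(D|.) = -ln L* p_1-almost surely.  As p_1 has density p(D|.)
   with respect to the prior, prior-almost every theta then has
   p(D|theta) in {0, L*}, and for such a likelihood
   p(D|.)^lambda = L*^(lambda-1) p(D|.).  Hence every tempered posterior
   equals p_1, lambda |-> B(p_lambda) is constant and its derivative at 1
   vanishes, contradicting the cold posterior effect. *)

From HB Require Import structures.
From mathcomp Require Import all_boot all_order all_algebra.
From mathcomp Require Import all_classical all_reals all_analysis measurable_realfun.
Import Order.TTheory GRing.Theory Num.Theory numFieldNormedType.Exports.
Local Open Scope classical_set_scope.
Local Open Scope ring_scope.

Lemma derive1_near_cst (R : realType) (b : R -> R) (a : R) :
  (\forall x \near a, b x = b a) -> derive1 b a = 0.
Proof. by move=> ba; rewrite derive1E (near_eq_derive _ ba) derive_cst. Qed.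

Section integral_bounded_below.
Local Open Scope ereal_scope.
Context {d : measure_display} {T : measurableType d} {R : realType}.

Lemma measurable_oppe_lne (g : T -> R) : measurable_fun setT g ->
  measurable_fun setT (fun t => - lne (g t)%:E).
Proof.
move=> mg; rewrite (_ : (fun t => _) =
    (fun t => if (g t <= 0)%R then +oo else (- ln (g t))%:E)); last first.
  by apply/funext => t /=; case: ifPn.
apply: measurable_fun_ifT; first exact: measurable_fun_ler.
  exact: measurable_cst.
apply/measurable_EFinP/measurable_funN; exact: measurableT_comp mg.
Qed.

Lemma integrable_bounded_below (mu : {finite_measure set T -> \bar R})
    (k : T -> \bar R) (c : R) :
  measurable_fun setT k -> (forall t, c%:E <= k t) ->
  \int[mu]_x k x < +oo -> mu.-integrable setT k.
Proof.
move=> mk ck klty.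
have kneg_lty : \int[mu]_x k^\- x < +oo.
  apply: (@le_lt_trans _ _ (\int[mu]_x (cst `|c|%:E) x)).
    apply: ge0_le_integral => //; first exact: measurable_funeneg.
    move=> t _; rewrite funenegE ge_max lee_fin normr_ge0 andbT leeNl -EFinN.
    by apply: le_trans (ck t); rewrite lee_fin lerNl -normrN ler_norm.
  by rewrite integral_cst // ltey_eq fin_numM // fin_num_measure.
have kpos_lty : \int[mu]_x k^\+ x < +oo.
  rewrite ltey; apply/eqP => kpos_y; move: klty.
  by rewrite integralE kpos_y addye ?ltxx // eqe_oppLR /= -ltey.
apply/integrableP; split => //.
rewrite (eq_integral (fun x => k^\+ x + k^\- x)); last first.
  by move=> x _; rewrite -/((abse \o k) x) fune_abse.
rewrite ge0_integralD //; first exact: lte_add_pinfty.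
  exact: measurable_funepos.
exact: measurable_funeneg.
Qed.

Lemma ae_eq_cst_of_integral_le (P : probability T R) (k : T -> \bar R) (c : R) :
  measurable_fun setT k -> (forall t, c%:E <= k t) ->
  \int[P]_x k x <= c%:E -> ae_eq P setT k (cst c%:E).
Proof.
move=> mk ck kc.
have ik : P.-integrable setT k.
  by apply: integrable_bounded_below mk ck _; apply: le_lt_trans kc (ltry _).
have ic : P.-integrable setT (EFin \o cst c).
  exact: finite_measure_integrable_cst.
have kc_ge0 t : 0 <= (k \- (EFin \o cst c)) t.
  by have := ck t; rewrite -(@sube_ge0 _ c%:E).
have : \int[P]_x `|(k \- (EFin \o cst c)) x| = 0.
  rewrite (eq_integral (k \- (EFin \o cst c))); last first.
    by move=> t _; rewrite gee0_abs.
  apply/eqP; rewrite eq_le integral_ge0 ?andbT //.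
  rewrite integralB // -[X in _ - X]/(\int[P]_x (cst c%:E) x) integral_cst //.
  by rewrite [X in _ * X](_ : _ = 1) ?mule1 ?sube_le0 //; exact: probability_setT.
have mkc : measurable_fun setT (k \- (EFin \o cst c)).
  by apply: emeasurable_funB mk _; exact/measurable_EFinP.
move/(ae_eq_integral_abs _ measurableT mkc); apply: filterS => t /(_ I) + _ /=.
by case: (k t) => [r||] //= [/subr0_eq ->].
Qed.

End integral_bounded_below.

Section density_measure.
Local Open Scope ereal_scope.
Context d (T : measurableType d) (R : realType).

Lemma density_measureE (mu : {measure set T -> \bar R}) (g : T -> R) (U : set T) :
  measurable_fun setT g -> (forall x, (0 <= g x)%R) ->
  density_measure mu g U = \int[mu]_(x in U) (g x)%:E.
Proof.
by move=> mg g0; rewrite /density_measure; case: asboolP => // -[]; split.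
Qed.

End density_measure.

Section tempered_posterior.
Local Open Scope ereal_scope.
Context {dT dY dX : measure_display} {R : realType} {Theta : measurableType dT}
  {Y : measurableType dY} {X : measurableType dX} {prior : probability Theta R}
  {f : Y -> X -> Theta -> R} {n : nat} {D : 'I_n -> (Y * X)%type}.
Hypothesis f_ge0 : forall y x theta, (0 <= f y x theta)%R.
Hypothesis f_meas : forall y x, measurable_fun setT (f y x).

Local Notation L := (likelihood f D).
Local Notation Z := (evidence prior f D).
Local Notation p := (tempered_posterior prior f D).

Lemma likelihood_ge0 t : (0 <= L t)%R.
Proof. by apply: prodr_ge0 => i _; exact: f_ge0. Qed.

Lemma measurable_likelihood : measurable_fun setT L.
Proof. by apply: measurable_prod => i _; exact: f_meas. Qed.

Let measurable_powL lam : measurable_fun setT (fun t => L t `^ lam)%R.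
Proof. exact: measurableT_comp (measurable_powR _) measurable_likelihood. Qed.

Let powL_ge0 lam t : (0 <= L t `^ lam)%R.
Proof. exact: powR_ge0. Qed.

Lemma tempered_posteriorE lam U : 0 < Z lam < +oo ->
  p lam U = (\int[prior]_(x in U) (L x `^ lam)%:E) * ((fine (Z lam))^-1)%:E.
Proof.
rewrite /evidence => /andP[Z0 Zoo].
rewrite /tempered_posterior /mnormalize /= density_measureE //.
by rewrite (gt_eqF Z0) (lt_eqF Zoo) /= density_measureE.
Qed.

Lemma tempered_posterior_scale lam lam' (c : R) : (0 < c)%R ->
  0 < Z lam < +oo -> 0 < Z lam' < +oo ->
  {ae prior, forall t, L t `^ lam = c * L t `^ lam'}%R ->
  forall U, measurable U -> p lam U = p lam' U.
Proof.
move=> c0 Zlam Zlam' Lc.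
have intZ U : measurable U -> \int[prior]_(x in U) (L x `^ lam)%:E =
    c%:E * \int[prior]_(x in U) (L x `^ lam')%:E.
  move=> mU.
  rewrite (@ae_eq_integral _ _ _ _ _ (fun x => (c * L x `^ lam')%:E)) //.
  - under eq_integral do rewrite EFinM.
    rewrite ge0_integralZl_EFin ?ltW //; first by move=> x _; rewrite lee_fin.
    exact/measurable_EFinP/measurable_funTS.
  - exact/measurable_EFinP/measurable_funTS.
  - by apply/measurable_EFinP/measurable_funTS/measurable_funM.
  - by apply: filterS Lc => t + _ => ->.
move=> U mU; rewrite !tempered_posteriorE // intZ // /evidence intZ //.
have Zlam'_fin : \int[prior]_x (L x `^ lam')%:E \is a fin_num.
  by move: Zlam' => /andP[/ltW Z0 Zoo]; rewrite ge0_fin_numE.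
rewrite fineM //= invfM EFinM -muleA muleCA; congr (_ * _).
by rewrite muleA -EFinM mulfV ?gt_eqF // mul1r.
Qed.

Lemma ae_prior_of_tempered_posterior lam (P : Theta -> Prop) : (0 < lam)%R ->
  0 < Z lam < +oo -> {ae p lam, forall t, P t} ->
  {ae prior, forall t, L t = 0%R \/ P t}.
Proof.
move=> lam0 Zlam [N [mN pN0 PN]].
have : \int[prior]_(x in N) `|(L x `^ lam)%:E| = 0.
  under eq_integral do rewrite gee0_abs ?lee_fin //.
  move: pN0; rewrite tempered_posteriorE // => /eqP.
  rewrite mule_eq0 eqe invr_eq0; move: Zlam => /andP[Z0 Zoo].
  rewrite fine_eq0 ?ge0_fin_numE ?ltW // (gt_eqF Z0).
  by rewrite orbF => /eqP.
have mpowL : measurable_fun setT (fun x => (L x `^ lam)%:E).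
  exact/measurable_EFinP.
move/(ae_eq_integral_abs _ mN (measurable_funTS mpowL)); apply: filterS => t Nt.
have [Pt|nPt] := pselect (P t); [by right|left].
by apply: (@powR_eq0_eq0 _ _ lam); case: (Nt (PN t nPt)).
Qed.

Lemma tempered_posterior_two_valued (Ls lam : R) : (0 < Ls)%R -> (0 < lam)%R ->
  0 < Z lam < +oo -> 0 < Z 1 < +oo ->
  {ae prior, forall t, L t = 0%R \/ L t = Ls} ->
  forall U, measurable U -> p lam U = p 1 U.
Proof.
move=> Ls0 lam0 Zlam Z1 Ls_ae.
apply: (@tempered_posterior_scale _ _ (Ls `^ (lam - 1))) => //.
  exact: powR_gt0.
apply: filterS Ls_ae => t [|] ->.
  by rewrite powR0 ?gt_eqF // powRr1 // mulr0.
by rewrite -powRD ?subrK // gt_eqF // implybT.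
Qed.

Lemma likelihood_argmin_gt0 ts : 0 < Z 1 ->
  (forall t, - lne (L ts)%:E <= - lne (L t)%:E) -> (0 < L ts)%R.
Proof.
move=> Z0 ts_min; rewrite lt_neqAle likelihood_ge0 andbT; apply/eqP => Lts0.
have L0 t : L t = 0%R.
  apply/eqP; rewrite eq_le likelihood_ge0 andbT leNgt; apply/negP => Lt0.
  by have := ts_min t; rewrite -Lts0 le0_lneNy // lne_EFin.
move: Z0; rewrite /evidence (eq_integral (cst 0)) ?integral0 ?ltxx // => t _.
by rewrite L0 powRr1.
Qed.

End tempered_posterior.

Theorem proposition2p2
  (dT dY dX : measure_display) (R : realType)
  (Theta : measurableType dT) (Y : measurableType dY) (X : measurableType dX)
  (prior : probability Theta R)
  (f : Y -> X -> Theta -> R)                 (* f y x theta = p(y | x, theta) *)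
  (n : nat) (D : 'I_n -> (Y * X)%type)       (* dataset D = (y_i, x_i)_{i<n} *)
  (nu : probability (Y * X)%type R)          (* data-generating distribution *)
  (b : R -> R)                               (* lambda |-> B(p_lambda) near 1 *)
  (f_ge0 : forall y x theta, 0 <= f y x theta)
  (f_meas : forall y x, measurable_fun setT (f y x))
  (proper : forall lambda : R, 0 < lambda ->
     (0 < evidence prior f D lambda < +oo)%E)
  (hB : \forall lambda \near (1 : R),
     bayes_loss nu f (tempered_posterior prior f D lambda) = (b lambda)%:E)
  (hder : derivable b 1 1)
  (cold : derive1 b 1 < 0) :
  forall theta_star : Theta,
    (forall theta : Theta,
       (- lne (likelihood f D theta_star)%:E <= - lne (likelihood f D theta)%:E)%E) ->
    (- lne (likelihood f D theta_star)%:E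
       < gibbs_loss f D (tempered_posterior prior f D 1))%E.
Proof.
move=> ts ts_min; have Z1 := proper _ ltr01.
have Lts0 := likelihood_argmin_gt0 f_ge0 _ (andP Z1).1 ts_min.
rewrite ltNge; apply/negP; rewrite lne_EFin // => gibbs_le.
have p1_ae : {ae tempered_posterior prior f D 1,
    forall t, likelihood f D t = likelihood f D ts}.
  have ln_le t : ((- ln (likelihood f D ts))%:E <= - lne (likelihood f D t)%:E)%E.
    by have := ts_min t; rewrite lne_EFin.
  have mk := measurable_oppe_lne _ (measurable_likelihood (D := D) f_meas).
  have := ae_eq_cst_of_integral_le _ _ _ mk ln_le gibbs_le.
  apply: filterS => t /(_ I).
  have [Lt0|Lt0] := leP (likelihood f D t) 0; first by rewrite le0_lneNy ?lee_fin.
  by rewrite lne_EFin // => -[/oppr_inj]; apply: ln_inj; rewrite posrE.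
have prior_ae := ae_prior_of_tempered_posterior f_meas _ _ ltr01 Z1 p1_ae.
have bayes_cst lam : 0 < lam ->
    bayes_loss nu f (tempered_posterior prior f D lam) =
    bayes_loss nu f (tempered_posterior prior f D 1).
  move=> lam0; rewrite /bayes_loss; apply: eq_integral => z _.
  have p_eq := tempered_posterior_two_valued f_meas _ _ Lts0 lam0 (proper _ lam0)
    Z1 prior_ae.
  by rewrite (eq_measure_integral _ (fun U mU _ => p_eq U mU)).
suff : derive1 b 1 = 0 by move=> db; move: cold; rewrite db ltxx.
apply: derive1_near_cst; near=> lam.
apply: EFin_inj; rewrite -(near hB lam) // bayes_cst; first exact: nbhs_singleton hB.
by near: lam; exact: lt_nbhsr ltr01.
Unshelve. all: by end_near.
Qed.
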